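(* Let $K$ be a field, $n\ge3$, and $\boldsymbol{\lambda}=(\lambda_1,\dots,\lambda_n)$ a vector of positive integers with $\gcd(\lambda_1,\dots,\lambda_n)>n-2$. Then the monomial ideal $I(\boldsymbol{\lambda})\subseteq K[x_1,\dots,x_n]$ is normal.
   Context: $I(\boldsymbol{\lambda})$ is the integral closure in $K[x_1,\dots,x_n]$ of $(x_1^{\lambda_1},\dots,x_n^{\lambda_n})$. An ideal is normal if all its positive powers are integrally closed. *)

From HB Require Import structures.
From mathcomp Require Import all_boot all_order all_algebra.
From mathcomp Require Import mpoly.
Set Implicit Arguments. Unset Strict Implicit. Unset Printing Implicit Defensive.
Import GRing.Theory.
Local Open Scope ring_scope.

Section IdealDefs.
Variable R : comNzRingType.

Definition ideal_gen (s : seq R) : R -> Prop :=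
  fun f => exists c : 'I_(size s) -> R, f = \sum_(i < size s) c i * s`_i.

Definition ideal_pow (I : R -> Prop) (k : nat) : R -> Prop :=
  fun f => exists (m : nat) (r : 'I_m -> R) (a : 'I_m -> 'I_k -> R),
    (forall i j, I (a i j)) /\ f = \sum_(i < m) r i * \prod_(j < k) a i j.

Definition integral_over_ideal (I : R -> Prop) (f : R) : Prop :=
  exists (k : nat) (a : nat -> R), (0 < k)%N /\
    (forall i, (1 <= i <= k)%N -> ideal_pow I i (a i)) /\
    f ^+ k + \sum_(1 <= i < k.+1) a i * f ^+ (k - i) = 0.

Definition integral_closure (I : R -> Prop) : R -> Prop :=
  integral_over_ideal I.

Definition integrally_closed (I : R -> Prop) : Prop :=
  forall f, integral_over_ideal I f -> I f.

Definition normal_ideal (I : R -> Prop) : Prop :=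
  forall k : nat, (0 < k)%N -> integrally_closed (ideal_pow I k).

End IdealDefs.

Definition I_lambda (K : fieldType) (n : nat) (lam : 'I_n -> nat)
  : {mpoly K[n]} -> Prop :=
  integral_closure (ideal_gen [seq 'X_i ^+ lam i | i <- enum 'I_n]).

From mathcomp Require Import all_boot all_order all_algebra.
From mathcomp Require Import mpoly.
From mathcomp Require Import zify.
Set Implicit Arguments. Unset Strict Implicit. Unset Printing Implicit Defensive.
Import GRing.Theory.
Local Open Scope ring_scope.

(* Let d be the gcd of the lam_i, mu_i := lam_i / d, P := prod_i mu_i, and give
   x_i the weight w_i := P / mu_i, so that every generator x_i^lam_i has weighted
   degree L := d * P.  The substitution x_i |-> x_i t^w_i turns weighted order
   into t-adic order, a valuation; hence every element of I(lam)^k, and of its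
   integral closure, only has monomials of weighted degree >= k L.
   Conversely, a monomial of weighted degree >= L lies in I(lam) (its L-th power
   lies in the L-th power of the monomial ideal), and a monomial of weighted
   degree >= (k + 1) L with k >= 1 contains d disjoint blocks x_i^mu_i -- this
   counting step is where d > n - 2 is needed.  Their product has weighted degree
   exactly L, so splitting it off and inducting on k shows that such a monomial
   lies in I(lam)^(k+1). *)

Lemma split_lshift m n (i : 'I_m) : split (lshift n i) = inl i.
Proof. exact: (unsplitK (inl i)). Qed.

Lemma split_rshift m n (i : 'I_n) : split (rshift m i) = inr i.
Proof. exact: (unsplitK (inr i)). Qed.

Section IdealPow.
Variables (R : comNzRingType) (I : R -> Prop).

Lemma ideal_pow_zero k : ideal_pow I k 0.
Proof. by exists 0%N, (fun _ => 0), (fun _ _ => 0); split; [case | rewrite big_ord0]. Qed.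

Lemma ideal_powD k f g : ideal_pow I k f -> ideal_pow I k g -> ideal_pow I k (f + g).
Proof.
move=> [m1 [r1 [a1 [Ia1 ->]]]] [m2 [r2 [a2 [Ia2 ->]]]].
exists (m1 + m2)%N.
exists (fun i => match split i with inl i1 => r1 i1 | inr i2 => r2 i2 end).
exists (fun i => match split i with inl i1 => a1 i1 | inr i2 => a2 i2 end).
split; first by move=> i j; case: (split i).
by rewrite big_split_ord; congr (_ + _); apply: eq_bigr => i _;
  rewrite ?split_lshift ?split_rshift.
Qed.

Lemma ideal_powMl k r f : ideal_pow I k f -> ideal_pow I k (r * f).
Proof.
move=> [m [r1 [a [Ia ->]]]]; exists m, (fun i => r * r1 i), a; split => //.
by rewrite mulr_sumr; apply: eq_bigr => i _; rewrite mulrA.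
Qed.

Lemma ideal_powN k f : ideal_pow I k f -> ideal_pow I k (- f).
Proof. by rewrite -mulN1r; apply: ideal_powMl. Qed.

Lemma ideal_pow_sum k (T : eqType) (s : seq T) (F : T -> R) :
  (forall x, x \in s -> ideal_pow I k (F x)) -> ideal_pow I k (\sum_(x <- s) F x).
Proof.
move=> IF; rewrite big_seq.
by apply: big_ind; [exact: ideal_pow_zero | exact: ideal_powD | exact: IF].
Qed.

Lemma ideal_pow0 f : ideal_pow I 0 f.
Proof.
exists 1%N, (fun _ => f), (fun _ _ => 0); split; first by move=> _ [].
by rewrite big_ord1 big_ord0 mulr1.
Qed.

Lemma ideal_powSr k f p : ideal_pow I k f -> I p -> ideal_pow I k.+1 (f * p).
Proof.
move=> [m [r [a [Ia ->]]]] Ip; rewrite -addn1.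
exists m, r, (fun i j => match split j with inl j1 => a i j1 | inr _ => p end).
split; first by move=> i j; case: (split j).
rewrite mulr_suml; apply: eq_bigr => i _.
rewrite big_split_ord big_ord1 -mulrA split_rshift; congr (_ * (_ * _)).
by apply: eq_bigr => j _; rewrite split_lshift.
Qed.

Lemma ideal_pow_prod (J : Type) (r : seq J) (g : J -> R) (e : J -> nat) :
  (forall j, I (g j)) -> ideal_pow I (\sum_(j <- r) e j) (\prod_(j <- r) g j ^+ e j).
Proof.
move=> Ig; elim: r => [|j r IHr]; first by rewrite !big_nil; apply: ideal_pow0.
rewrite !big_cons addnC mulrC.
elim: (e j) => [|t IHt]; first by rewrite addn0 expr0 mulr1.
by rewrite exprSr mulrA addnS; apply: ideal_powSr.
Qed.

Lemma ideal_pow_le k l f : (k <= l)%N -> ideal_pow I l f -> ideal_pow I k f.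
Proof.
move=> /subnKC <-; move: (l - k)%N => t [m [r [a [Ia ->]]]].
exists m, (fun i => r i * \prod_(j < t) a i (rshift k j)), (fun i j => a i (lshift t j)).
split => //; apply: eq_bigr => i _; rewrite big_split_ord /=.
by rewrite mulrA -!mulrA [X in _ * X = _]mulrC.
Qed.

Lemma integral_over_ideal_of_pow k f :
  (0 < k)%N -> ideal_pow I k (f ^+ k) -> integral_over_ideal I f.
Proof.
move=> k_gt0 Ifk; exists k, (fun i => if i == k then - f ^+ k else 0).
split=> //; split=> [i _|].
  by case: eqP => [->|_]; [exact: ideal_powN | exact: ideal_pow_zero].
rewrite big_nat_recr //= eqxx subnn expr0 mulr1 big_nat_cond big1 ?add0r ?addrN //.
by move=> i /andP[/andP[_ /ltn_eqF ->] _]; rewrite mul0r.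
Qed.

End IdealPow.

Lemma poly_eq_mulXn_coef0 (R : nzRingType) (g : {poly R}) :
  g != 0 -> exists v h, g = h * 'X^v /\ h`_0 != 0.
Proof.
move=> g_neq0; have has_coef : exists v, g`_v != 0.
  by exists (size g).-1; rewrite -lead_coefE lead_coef_eq0.
case: (ex_minnP has_coef) => v gv_neq0 v_min.
have take0 : take_poly v g = 0.
  apply/polyP => i; rewrite coef_take_poly coef0.
  by case: ltnP => // lt_iv; apply: contraTeq lt_iv => /v_min; rewrite leqNgt.
exists v, (drop_poly v g); split; first by rewrite -[LHS](poly_take_drop v) take0 add0r.
by rewrite coef_drop_poly.
Qed.

Section OrderFiltration.
Variables (R : comNzRingType) (S : idomainType) (psi : {rmorphism R -> {poly S}}).

Definition order_ge (N : nat) (p : R) := exists h, psi p = h * 'X^N.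

Lemma order_ge0 N : order_ge N 0.
Proof. by exists 0; rewrite rmorph0 mul0r. Qed.

Lemma order_geD N p q : order_ge N p -> order_ge N q -> order_ge N (p + q).
Proof. by move=> [h1 e1] [h2 e2]; exists (h1 + h2); rewrite rmorphD e1 e2 mulrDl. Qed.

Lemma order_geMl N r p : order_ge N p -> order_ge N (r * p).
Proof. by move=> [h e]; exists (psi r * h); rewrite rmorphM e mulrA. Qed.

Lemma order_ge_le N M p : (N <= M)%N -> order_ge M p -> order_ge N p.
Proof.
by move=> /subnK <- [h e]; exists (h * 'X^(M - N)); rewrite e exprD mulrA.
Qed.

Lemma order_geM s t p q : order_ge s p -> order_ge t q -> order_ge (s + t) (p * q).
Proof.
by move=> [h1 e1] [h2 e2]; exists (h1 * h2); rewrite rmorphM e1 e2 exprD mulrACA.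
Qed.

Lemma order_ge_prod N k (F : 'I_k -> R) :
  (forall j, order_ge N (F j)) -> order_ge (k * N) (\prod_j F j).
Proof.
elim: k F => [|k IHk] F FN; first by rewrite big_ord0; exists 1; rewrite rmorph1 mul1r.
by rewrite big_ord_recr mulSn addnC; apply: order_geM => //; apply: IHk.
Qed.

Lemma order_ge_ideal_pow (I : R -> Prop) N k f :
  (forall g, I g -> order_ge N g) -> ideal_pow I k f -> order_ge (k * N) f.
Proof.
move=> IN [m [r [a [Ia ->]]]].
apply: big_ind => [|p q|i _]; [exact: order_ge0 | exact: order_geD |].
by apply/order_geMl/order_ge_prod => j; apply: IN.
Qed.

(* If psi f = h * X^v with h(0) <> 0 and v < N, the leading part of the
   integral equation at order k * v is h^k * X^(k v), which cannot cancel. *)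
Lemma order_ge_integral N k f (a : nat -> R) : (0 < k)%N ->
  (forall i, (1 <= i <= k)%N -> order_ge (i * N) (a i)) ->
  f ^+ k + \sum_(1 <= i < k.+1) a i * f ^+ (k - i) = 0 -> order_ge N f.
Proof.
move=> k_gt0 aN eq_f.
have [f0|f_neq0] := eqVneq (psi f) 0; first by exists 0; rewrite f0 mul0r.
have [v [h [def_f h0]]] := poly_eq_mulXn_coef0 f_neq0.
have [le_Nv|lt_vN] := leqP N v; first by apply: order_ge_le le_Nv _; exists h.
have tail_ge : order_ge (k * v).+1 (\sum_(1 <= i < k.+1) a i * f ^+ (k - i)).
  rewrite big_seq; apply: big_ind => [|p q|i]; [exact: order_ge0 | exact: order_geD |].
  rewrite mem_index_iota => /andP[i_ge1 i_le_k].
  have f_ge : order_ge v f by exists h.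
  apply: (@order_ge_le _ (i * N + (k - i) * v)); first nia.
  apply: order_geM; first by apply: aN; rewrite i_ge1.
  elim: (k - i)%N => [|j IHj]; first by exists 1; rewrite rmorph1 mul1r.
  by rewrite exprSr mulSn addnC; apply: order_geM.
have [q def_tail] := tail_ge.
move/(congr1 psi): eq_f; rewrite rmorphD rmorphXn rmorph0 def_f def_tail => /eqP.
have Xkv_neq0 : ('X^(k * v) : {poly S}) != 0 by rewrite expf_neq0 // polyX_eq0.
rewrite addr_eq0 exprMn -exprM mulnC exprSr mulrA [q * _ * _]mulrAC -mulNr.
move=> /eqP /(mulIf Xkv_neq0) /(congr1 (horner^~ 0)) /=.
rewrite horner_exp !hornerE oppr0 horner_coef0 => /eqP.
by rewrite expf_eq0 k_gt0 (negbTE h0).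
Qed.

Lemma order_ge_integral_closure (I : R -> Prop) N f :
  (forall g, I g -> order_ge N g) -> integral_closure I f -> order_ge N f.
Proof.
move=> IN [k [a [k_gt0 [Ia eq_f]]]]; apply: order_ge_integral k_gt0 _ eq_f.
by move=> i /Ia; apply: order_ge_ideal_pow.
Qed.

End OrderFiltration.

Section WeightedDegree.
Variables (n : nat) (w : 'I_n -> nat).

Definition wdeg (m : 'X_{1..n}) := (\sum_(i < n) m i * w i)%N.

Lemma wdegD m1 m2 : wdeg (m1 + m2)%MM = (wdeg m1 + wdeg m2)%N.
Proof. by rewrite /wdeg -big_split; apply: eq_bigr => i _; rewrite mnmDE mulnDl. Qed.

Lemma wdeg0 : wdeg 0%MM = 0%N.
Proof. by rewrite /wdeg big1 // => i _; rewrite mnm0E. Qed.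

Lemma wdegU i c : wdeg (U_(i) *+ c)%MM = (c * w i)%N.
Proof.
rewrite /wdeg (bigD1 i) //= big1 ?addn0 => [|j ne_ji].
  by rewrite mulmnE mnm1E eqxx mul1n.
by rewrite mulmnE mnm1E eq_sym (negbTE ne_ji).
Qed.

Lemma wdegB m b : (b <= m)%MM -> wdeg (m - b)%MM = (wdeg m - wdeg b)%N.
Proof. by move=> le_bm; rewrite -{2}(submK le_bm) wdegD addnK. Qed.

End WeightedDegree.

Section WeightedSubstitution.
Variables (K : idomainType) (n : nat) (w : 'I_n -> nat).
Local Notation MP := {mpoly K[n]}.

Definition wsubst : {rmorphism MP -> {poly MP}} :=
  mmap (polyC \o (@mpolyC n K)) (fun i => ('X_i)%:P * 'X^(w i)).

Lemma wsubstX m : wsubst 'X_[m] = ('X_[m])%:P * 'X^(wdeg w m).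
Proof.
rewrite /wsubst /= mmapX /mmap1.
under eq_bigr => i _ do rewrite exprMn -exprM.
rewrite big_split /= prodrXr.
under eq_bigr => i _ do rewrite -rmorphXn.
rewrite -rmorph_prod -mpolyXE_id /wdeg.
by congr (_ * 'X^_); apply: eq_bigr => i _; rewrite mulnC.
Qed.

Lemma wsubstE p :
  wsubst p = \sum_(m <- msupp p) (p@_m *: 'X_[m])%:P * 'X^(wdeg w m).
Proof.
rewrite {1}[p]mpolyE rmorph_sum; apply: eq_bigr => m _.
by rewrite -mul_mpolyC rmorphM wsubstX /= mmapC /= mulrA -polyCM.
Qed.

Lemma order_ge_mpolyX m : order_ge wsubst (wdeg w m) 'X_[m].
Proof. by exists ('X_[m])%:P; rewrite wsubstX. Qed.

Lemma order_ge_msupp N p m :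
  order_ge wsubst N p -> m \in msupp p -> (N <= wdeg w m)%N.
Proof.
move=> [h def_p] m_supp; rewrite leqNgt; apply/negP => lt_m_N.
have : ((wsubst p)`_(wdeg w m))@_m = p@_m.
  rewrite wsubstE coef_sum raddf_sum /= (bigD1_seq m) ?msupp_uniq //= big1 ?addr0.
    by rewrite coefCM coefXn eqxx mulr1 mcoeffZ mcoeffX eqxx mulr1.
  move=> m' ne_m'm; rewrite coefCM coefXn.
  case: eqP => _; last by rewrite mulr0 mcoeff0.
  by rewrite mulr1 mcoeffZ mcoeffX (negbTE ne_m'm) mulr0.
by rewrite def_p coefMXn lt_m_N mcoeff0 => /esym /eqP; rewrite mcoeff_eq0 m_supp.
Qed.

End WeightedSubstitution.

Section Blocks.
Variables (n : nat) (mu : 'I_n -> nat).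
Hypothesis mu_gt0 : forall i, (0 < mu i)%N.

Definition prod_mu := (\prod_(i < n) mu i)%N.
Definition coweight i := (\prod_(j < n | j != i) mu j)%N.
Definition nblocks (m : 'X_{1..n}) := (\sum_(i < n) m i %/ mu i)%N.

Lemma mu_coweight i : (mu i * coweight i = prod_mu)%N.
Proof. by rewrite /prod_mu (bigD1 i). Qed.

Lemma coweight_gt0 i : (0 < coweight i)%N.
Proof. exact: prodn_gt0. Qed.

Lemma wdeg_coweight_le m : (wdeg coweight m + n <= (nblocks m + n) * prod_mu)%N.
Proof.
have le_i i : (m i * coweight i + 1 <= (m i %/ mu i + 1) * prod_mu)%N.
  rewrite -(mu_coweight i); have := ltn_ceil (m i) (mu_gt0 i).
  by have := coweight_gt0 i; move: (m i %/ mu i)%N => q; nia.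
have := @leq_sum _ (index_enum 'I_n) xpredT _ _ (fun i _ => le_i i).
by rewrite -big_distrl !big_split /= !sum1_card card_ord.
Qed.

(* Peel off [t] blocks x_i^(mu i), each of coweighted degree [prod_mu]. *)
Lemma exists_submnm_wdeg t m : (t <= nblocks m)%N ->
  exists2 b, (b <= m)%MM & wdeg coweight b = (t * prod_mu)%N.
Proof.
elim: t m => [|t IHt] m le_tm.
  by exists 0%MM; [apply/mnm_lepP => i; rewrite mnm0E | rewrite wdeg0].
have [i le_mu_m] : exists i, (mu i <= m i)%N.
  apply/existsP; apply: contraLR le_tm; rewrite negb_exists => /forallP small.
  suff -> : nblocks m = 0%N by [].
  by apply: big1 => i _; rewrite divn_small // ltnNge small.
pose u := (U_(i) *+ mu i)%MM.
have le_um : (u <= m)%MM.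
  apply/mnm_lepP => j; rewrite mulmnE mnm1E.
  by case: eqP => [<-|_]; rewrite ?mul1n ?mul0n.
have [|b le_b wdeg_b] := IHt (m - u)%MM.
  move: le_tm; rewrite /nblocks (bigD1 i) //= [X in (t <= X)%N](bigD1 i) //=.
  rewrite mnmBE mulmnE mnm1E eqxx mul1n -{1}(subnK le_mu_m) divnDr // divnn mu_gt0.
  rewrite addn1 addSn ltnS => /leq_trans; apply; rewrite leq_add2l.
  apply: leq_sum => j ne_ji.
  by rewrite mnmBE mulmnE mnm1E eq_sym (negbTE ne_ji) mul0n subn0.
exists (b + u)%MM; last by rewrite wdegD wdeg_b wdegU mu_coweight mulSn addnC.
apply/mnm_lepP => j; move/mnm_lepP: le_b => /(_ j); move/mnm_lepP: le_um => /(_ j).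
by rewrite mnmDE mnmBE => le_u le_b; rewrite -(subnK le_u) leq_add2r.
Qed.

End Blocks.

Section ILambda.
Variables (K : fieldType) (n : nat) (lam : 'I_n -> nat).
Hypothesis lam_gt0 : forall i, (0 < lam i)%N.

Local Notation d := (\big[gcdn/0%N]_(i < n) lam i).
Local Notation mu := (fun i => lam i %/ d)%N.
Local Notation w := (coweight mu).
Local Notation L := (d * prod_mu mu)%N.
Local Notation gens := [seq ('X_i : {mpoly K[n]}) ^+ lam i | i <- enum 'I_n].
Local Notation psi := (wsubst K w).
Local Notation Ilam := (@I_lambda K n lam).

Hypothesis gcd_large : (n - 2 < d)%N.

Lemma gcd_gt0 : (0 < d)%N.
Proof. exact: leq_ltn_trans (leq0n _) gcd_large. Qed.

Lemma lam_eq i : lam i = (mu i * d)%N.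
Proof. by rewrite divnK //; apply: (biggcdn_inf i). Qed.

Lemma mu_gt0 i : (0 < mu i)%N.
Proof. by have := lam_gt0 i; rewrite {1}lam_eq muln_gt0 => /andP[]. Qed.

Lemma lam_coweight i : (lam i * w i = L)%N.
Proof. by rewrite {1}lam_eq mulnAC mu_coweight mulnC. Qed.

Lemma L_gt0 : (0 < L)%N.
Proof. by rewrite muln_gt0 gcd_gt0; apply: prodn_gt0 => i; apply: mu_gt0. Qed.

Lemma ideal_gen_X i : ideal_gen gens ('X_i ^+ lam i).
Proof.
have lt_i : (i < size gens)%N by rewrite size_map size_enum_ord.
exists (fun j => ((j : nat) == i)%:R).
rewrite (bigD1 (Ordinal lt_i)) //= eqxx mul1r big1 ?addr0 => [|j ne_ji].
  by rewrite (nth_map i) ?size_enum_ord // nth_ord_enum.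
by case: eqP => [e|_]; [move: ne_ji; rewrite -val_eqE /= e eqxx | rewrite mul0r].
Qed.

Lemma order_ge_ideal_gen f : ideal_gen gens f -> order_ge psi L f.
Proof.
move=> [c ->]; apply: big_ind => [|p q|j _]; [exact: order_ge0 | exact: order_geD |].
apply: order_geMl; have /mapP[i _ ->] : gens`_j \in gens by apply: mem_nth.
by rewrite mpolyXn -(lam_coweight i) -wdegU; apply: order_ge_mpolyX.
Qed.

Lemma order_ge_I_lambda f : Ilam f -> order_ge psi L f.
Proof. exact: order_ge_integral_closure order_ge_ideal_gen. Qed.

Lemma I_lambda_mpolyX b : (L <= wdeg w b)%N -> Ilam 'X_[b].
Proof.
move=> le_L_b; apply: integral_over_ideal_of_pow L_gt0 _.
have -> : ('X_[b] : {mpoly K[n]}) ^+ L =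
    \prod_(i <- index_enum 'I_n) ('X_i ^+ lam i) ^+ (w i * b i).
  rewrite mpolyXE_id -prodrXl; apply: eq_bigr => i _.
  by rewrite -!exprM -(lam_coweight i); congr (_ ^+ _); nia.
apply: ideal_pow_le le_L_b _; rewrite [wdeg _ _](eq_bigr _ (fun i _ => mulnC _ _)).
by apply: ideal_pow_prod => i; apply: ideal_gen_X.
Qed.

(* With fewer than [d] blocks, [wdeg_coweight_le] would force [k * d <= n - 2]. *)
Lemma nblocks_ge_gcd k m :
  (0 < k)%N -> (k.+1 * L <= wdeg w m)%N -> (d <= nblocks mu m)%N.
Proof.
move=> k_gt0 le_m; rewrite leqNgt; apply/negP => lt_blocks.
have P_gt0 : (0 < prod_mu mu)%N by apply: prodn_gt0 => i; apply: mu_gt0.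
move: (wdeg_coweight_le mu_gt0 m) le_m lt_blocks gcd_large k_gt0 P_gt0.
move: (wdeg w m) (nblocks mu m) (prod_mu mu) d => W B P D; nia.
Qed.

Lemma ideal_pow_I_lambda_mpolyX k m :
  (k * L <= wdeg w m)%N -> ideal_pow Ilam k 'X_[m].
Proof.
elim: k m => [|k IHk] m le_m; first exact: ideal_pow0.
have [b le_bm [L_le_b le_rest]] : exists2 b, (b <= m)%MM &
    (L <= wdeg w b)%N /\ (k * L <= wdeg w (m - b)%MM)%N.
  have [k0|k_gt0] := posnP k.
    by exists m; [exact: lepm_refl | split; rewrite k0 ?mul1n in le_m *].
  have [b le_bm wdeg_b] := exists_submnm_wdeg mu_gt0 (nblocks_ge_gcd k_gt0 le_m).
  exists b => //; rewrite wdegB // wdeg_b; split=> //.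
  by move: le_m; rewrite mulSn; lia.
rewrite -(submK le_bm) mpolyXD.
by apply: ideal_powSr; [apply: IHk | apply: I_lambda_mpolyX].
Qed.

Lemma I_lambda_normal : normal_ideal Ilam.
Proof.
move=> k _ f int_f.
have ord_f : order_ge psi (k * L) f.
  apply: order_ge_integral_closure int_f => g.
  by apply: order_ge_ideal_pow => h; apply: order_ge_I_lambda.
rewrite [f]mpolyE; apply: ideal_pow_sum => m m_supp.
rewrite -mul_mpolyC; apply/ideal_powMl/ideal_pow_I_lambda_mpolyX.
exact: order_ge_msupp ord_f m_supp.
Qed.

End ILambda.

Theorem corollary4p4 (K : fieldType) (n : nat) (lam : 'I_n -> nat) :
  (3 <= n)%N ->
  (forall i, (0 < lam i)%N) ->
  (n - 2 < \big[gcdn/0%N]_(i < n) lam i)%N ->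
  normal_ideal (@I_lambda K n lam).
Proof.
(* The argument does not need [3 <= n]. *)
by move=> _ lam_gt0 gcd_large; apply: I_lambda_normal.
Qed.
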